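(* Let $L(y,z)$ be a positive cell complexity function, monotonically increasing in $y$ and $z$, with $L(y,z)=\Theta(z^a)$ for some constant $a>0$ (i.e. there are constants $0<c_1\le c_2$ with $c_1z^a\le L(y,z)\le c_2 z^a$ for all arguments). Consider, as $N\to\infty$, a 1-layered FDCA $\mathcal{A}_1$ and a 2-layered FDCA $\mathcal{A}_2$ with working zone of size $N$ recognizing the same nontrivial class $D$ of input configurations, with $P_1=|D|$, $P_2$ the cardinality of the class of layer-$1$ local configurations recognized by the top (layer-2) cell of $\mathcal{A}_2$, $p$ the cardinality of the class of layer-$0$ local configurations recognized by a layer-$1$ cell of $\mathcal{A}_2$, and $n$ the size of the layer-$1$ basic neighborhood of $\mathcal{A}_2$ (all of $P_1,P_2,p$ positive). Then: (a) $\dfrac{L(N,P_2)}{L(N,P_1)}\to 0$ if and only if $\dfrac{P_2}{P_1}\to 0$; (b) if $p=o\!\left(P_1/N^{1/a}\right)$, then $\dfrac{N\cdot L(n,p)}{L(N,P_1)}\to 0$.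
   Context: An FDCA is a finite layered cellular automaton on $\mathbb{Z}^2$ with binary alphabets, square basic neighborhoods $N_i=[-r_i,r_i]^2$, a square working zone $W=[w]^2$ with fixed boundary conditions, where layer-$i$ states are computed as $X_i(c)=f_i(x_{i-1,c})$ with $x_{i-1,c}(z)=X_{i-1}(c+z)$, $z\in N_i$. An automaton recognizes a class $D$ of input configurations by a cell $c$ of layer $i$ if some state $k$ satisfies $X_i(c)=k$ iff $X_0\in D$; a cell recognizes a class of local configurations of the preceding layer analogously. A 1-layered (resp. 2-layered) FDCA has a cell $c$ with $c+N_1=W$ (resp. $c+N_2=W$), recognition being done by that top-layer cell, so its basic neighborhood has size $N=|W|$. The cell complexity $L(n,p)$ depends on the neighborhood size $n$ and the cardinality $p$ of the class of local configurations the cell recognizes. *)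

From Stdlib Require Import ZArith Reals.
From Coquelicot Require Import Coquelicot.
From mathcomp Require Import all_boot.

Set Implicit Arguments.
Unset Strict Implicit.
Unset Printing Implicit Defensive.

Definition cell := (Z * Z)%type.
Definition cadd (c d : cell) : cell := ((c.1 + d.1)%Z, (c.2 + d.2)%Z).

(* Working zone W = [w]^2, here realised as {0,...,w-1}^2 (a translate of {1..w}^2). *)
Definition inW (w : nat) (c : cell) : Prop :=
  (0 <= c.1 < Z.of_nat w)%Z /\ (0 <= c.2 < Z.of_nat w)%Z.
Definition inWb (w : nat) (c : cell) : bool :=
  ((0 <=? c.1) && (c.1 <? Z.of_nat w) && (0 <=? c.2) && (c.2 <? Z.of_nat w))%Z.

(* Square basic neighborhood N = [-r, r]^2, indexed by a finite type. *)
Definition nbhd (r : nat) : finType := ('I_(r.*2.+1) * 'I_(r.*2.+1))%type.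
Definition offset (r : nat) (z : nbhd r) : cell :=
  ((Z.of_nat (nat_of_ord z.1) - Z.of_nat r)%Z, (Z.of_nat (nat_of_ord z.2) - Z.of_nat r)%Z).
Definition nbhd_size (r : nat) : nat := (r.*2.+1 * r.*2.+1)%N.

Definition lconf (r : nat) := {ffun nbhd r -> bool}.

Definition input (w : nat) := {ffun ('I_w * 'I_w) -> bool}.

(* A finite layered cellular automaton with working zone [w]^2:
   layers 0..fd_m, layer i (1 <= i <= fd_m) has radius fd_r i and local rule fd_f i;
   fixed boundary conditions: outside W, layer i is constantly fd_bnd i. *)
Record fdca (w : nat) := FDCA {
  fd_m : nat;
  fd_r : nat -> nat;
  fd_f : forall i : nat, lconf (fd_r i) -> bool;
  fd_bnd : nat -> bool
}.
Arguments fd_m {w}.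
Arguments fd_r {w}.
Arguments fd_f {w} f i.
Arguments fd_bnd {w}.

Definition input_at (w : nat) (X0 : input w) (b : bool) (c : cell) : bool :=
  if inWb w c then
    match insub (Z.to_nat c.1) : option 'I_w, insub (Z.to_nat c.2) : option 'I_w with
    | Some i, Some j => X0 (i, j)
    | _, _ => b
    end
  else b.

Definition local (r : nat) (X : cell -> bool) (c : cell) : lconf r :=
  [ffun z => X (cadd c (offset z))].

Fixpoint layer (w : nat) (A : fdca w) (X0 : input w) (i : nat) : cell -> bool :=
  match i with
  | 0 => fun c => input_at X0 (fd_bnd A 0) c
  | i'.+1 => fun c =>
      if inWb w c then fd_f A i'.+1 (local (fd_r A i'.+1) (layer A X0 i') c)
      else fd_bnd A i'.+1
  end.

Definition covers (w r : nat) (c : cell) : Prop :=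
  forall d : cell, inW w d <-> exists z : nbhd r, d = cadd c (offset z).

Definition recognizes (w : nat) (A : fdca w) (i : nat) (c : cell) (D : {set input w}) : Prop :=
  exists k : bool, forall X0 : input w, layer A X0 i c = k <-> X0 \in D.

Definition recognizes_local (r : nat) (f : lconf r -> bool) (C : {set lconf r}) : Prop :=
  exists k : bool, forall x : lconf r, f x = k <-> x \in C.

Definition fdca1_recognizes (w : nat) (A : fdca w) (D : {set input w}) : Prop :=
  fd_m A = 1%N /\ exists c : cell, inW w c /\ covers w (fd_r A 1) c /\ recognizes A 1 c D.

Definition fdca2_recognizes (w : nat) (A : fdca w) (D : {set input w}) : Prop :=
  fd_m A = 2%N /\ exists c : cell, inW w c /\ covers w (fd_r A 2) c /\ recognizes A 2 c D.

Definition nontrivial (w : nat) (D : {set input w}) : Prop := D != set0 /\ D != setT.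

(** The Theta-bound on L turns every ratio of complexities into the corresponding
    ratio of class sizes raised to the power a, up to the constant factors
    c1/c2 and c2/c1; since x |-> x^a is an increasing homeomorphism of the
    positive reals fixing 0 in the limit, a ratio tends to 0 iff its a-th power
    does.  For (b), N L(n,p) / L(N,P1) <= (c2/c1) N (p/P1)^a
    = (c2/c1) (p N^(1/a) / P1)^a.  The only information needed about the
    automata is N > 0. *)
From Stdlib Require Import ZArith Reals Lra Lia.
From Coquelicot Require Import Coquelicot.
From mathcomp Require Import all_boot.

Local Open Scope R_scope.

Lemma Rpower_gt0 x y : 0 < Rpower x y.
Proof. exact: exp_pos. Qed.

Lemma Rpower_div x y a : 0 < x -> 0 < y -> Rpower (x / y) a = Rpower x a / Rpower y a.
Proof.
move=> x_gt0 y_gt0; rewrite /Rdiv -Rpower_mult_distr //; last exact: Rinv_0_lt_compat.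
by rewrite /Rpower ln_Rinv // -exp_Ropp; congr (_ * exp _); ring.
Qed.

Lemma Rpower_RpowerK x a : 0 < x -> a <> 0 -> Rpower (Rpower x a) (/ a) = x.
Proof. by move=> x_gt0 a_neq0; rewrite Rpower_mult Rinv_r ?Rpower_1. Qed.

Lemma Rpower_RpowerVK x a : 0 < x -> a <> 0 -> Rpower (Rpower x (/ a)) a = x.
Proof. by move=> x_gt0 a_neq0; rewrite Rpower_mult Rinv_l ?Rpower_1. Qed.

Lemma Rdiv_le_compat x y u v : 0 <= x <= y -> 0 < v <= u -> x / u <= y / v.
Proof.
move=> xy vu; rewrite /Rdiv; apply: Rmult_le_compat; try lra.
  by apply/Rlt_le/Rinv_0_lt_compat; lra.
by apply: Rinv_le_contravar; lra.
Qed.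

Lemma is_lim_seq_Rpower_0 (u : nat -> R) a : 0 < a -> (forall k, 0 < u k) ->
  is_lim_seq u 0 -> is_lim_seq (fun k => Rpower (u k) a) 0.
Proof.
move=> a_gt0 u_gt0; rewrite -!is_lim_seq_spec => u_cvg eps.
have [M HM] := u_cvg (mkposreal _ (Rpower_gt0 eps (/ a))).
exists M => k /HM /=; rewrite !Rminus_0_r !Rabs_pos_eq; last 2 first.
- exact: Rlt_le (Rpower_gt0 _ _).
- exact: Rlt_le (u_gt0 k).
move=> uk_lt; rewrite -(Rpower_RpowerVK eps a (cond_pos eps)); last lra.
by apply: Rlt_Rpower_l => //; split.
Qed.

Lemma is_lim_seq_Rpower_0E {u : nat -> R} {a} : 0 < a -> (forall k, 0 < u k) ->
  is_lim_seq (fun k => Rpower (u k) a) 0 <-> is_lim_seq u 0.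
Proof.
move=> a_gt0 u_gt0; split; last exact: is_lim_seq_Rpower_0.
move=> /(is_lim_seq_Rpower_0 _ _ (Rinv_0_lt_compat _ a_gt0) (fun k => Rpower_gt0 (u k) a)).
by apply: is_lim_seq_ext => k; rewrite Rpower_RpowerK //; lra.
Qed.

Lemma is_lim_seq_0_le_scal {u v : nat -> R} (C : R) :
  (forall k, 0 <= u k <= C * v k) -> is_lim_seq v 0 -> is_lim_seq u 0.
Proof.
move=> uv v_cvg; apply: (is_lim_seq_le_le (fun _ => 0) _ (fun k => C * v k)) => //.
  exact: is_lim_seq_const.
by have := is_lim_seq_scal_l v C 0 v_cvg; rewrite /= Rmult_0_r.
Qed.

Section ThetaComplexity.

Variables (L : nat -> nat -> R) (a c1 c2 : R).
Hypotheses (c1_gt0 : 0 < c1) (c1_le_c2 : c1 <= c2).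
Hypothesis L_theta : forall y z, (0 < z)%coq_nat ->
  c1 * Rpower (INR z) a <= L y z <= c2 * Rpower (INR z) a.

Let c2_gt0 : 0 < c2. Proof. lra. Qed.

Lemma L_gt0 y z : (0 < z)%coq_nat -> 0 < L y z.
Proof.
move=> z_gt0; have [Lz_ge _] := L_theta y _ z_gt0.
have := Rmult_lt_0_compat _ _ c1_gt0 (Rpower_gt0 (INR z) a); lra.
Qed.

Lemma L_ratio_le y y' z z' : (0 < z)%coq_nat -> (0 < z')%coq_nat ->
  L y z / L y' z' <= c2 / c1 * Rpower (INR z / INR z') a.
Proof.
move=> z_gt0 z'_gt0; have Lz_gt0 := L_gt0 y _ z_gt0.
have z'a_gt0 := Rpower_gt0 (INR z') a.
have [_ Lz_le] := L_theta y _ z_gt0; have [Lz'_ge _] := L_theta y' _ z'_gt0.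
rewrite Rpower_div; try exact: lt_0_INR.
have -> : c2 / c1 * (Rpower (INR z) a / Rpower (INR z') a)
        = c2 * Rpower (INR z) a / (c1 * Rpower (INR z') a) by field; lra.
apply: Rdiv_le_compat; split; try lra.
exact: Rmult_lt_0_compat.
Qed.

Lemma L_ratio_ge y y' z z' : (0 < z)%coq_nat -> (0 < z')%coq_nat ->
  Rpower (INR z / INR z') a <= c2 / c1 * (L y z / L y' z').
Proof.
move=> z_gt0 z'_gt0; have Lz'_gt0 := L_gt0 y' _ z'_gt0.
have za_gt0 := Rpower_gt0 (INR z) a.
have [Lz_ge _] := L_theta y _ z_gt0; have [_ Lz'_le] := L_theta y' _ z'_gt0.
rewrite Rpower_div; try exact: lt_0_INR.
have -> : c2 / c1 * (L y z / L y' z') = (L y z / c1) / (L y' z' / c2).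
  by field; lra.
apply: Rdiv_le_compat; split.
- exact: Rlt_le.
- by apply/Rle_div_r => //; lra.
- exact: Rdiv_lt_0_compat.
- by apply/Rle_div_l => //; lra.
Qed.

Hypothesis a_gt0 : 0 < a.

Lemma is_lim_seq_L_ratio_0E (y y' z z' : nat -> nat) :
  (forall k, (0 < z k)%coq_nat) -> (forall k, (0 < z' k)%coq_nat) ->
  is_lim_seq (fun k => L (y k) (z k) / L (y' k) (z' k)) 0
  <-> is_lim_seq (fun k => INR (z k) / INR (z' k)) 0.
Proof.
move=> z_gt0 z'_gt0.
have ratio_gt0 k : 0 < INR (z k) / INR (z' k).
  by apply: Rdiv_lt_0_compat; apply: lt_0_INR.
rewrite -(is_lim_seq_Rpower_0E a_gt0 ratio_gt0); split.
- move=> L_cvg; apply: (is_lim_seq_0_le_scal (c2 / c1) _ L_cvg) => k.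
  split; first exact/Rlt_le/Rpower_gt0.
  exact: L_ratio_ge.
- move=> ratio_cvg; apply: (is_lim_seq_0_le_scal (c2 / c1) _ ratio_cvg) => k.
  split; last exact: L_ratio_le.
  by apply/Rlt_le/Rdiv_lt_0_compat; apply: L_gt0.
Qed.

Lemma scaled_L_ratio_le m y y' z z' : 0 < m -> (0 < z)%coq_nat -> (0 < z')%coq_nat ->
  m * L y z / L y' z' <= c2 / c1 * Rpower (INR z / (INR z' / Rpower m (/ a))) a.
Proof.
move=> m_gt0 z_gt0 z'_gt0; have z'_gt0R := lt_0_INR _ z'_gt0.
have ma_gt0 := Rpower_gt0 m (/ a).
have -> : INR z / (INR z' / Rpower m (/ a)) = Rpower m (/ a) * (INR z / INR z').
  by field; lra.
rewrite -Rpower_mult_distr // ?Rpower_RpowerVK //; try lra; last first.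
  by apply: Rdiv_lt_0_compat => //; apply: lt_0_INR.
have -> : c2 / c1 * (m * Rpower (INR z / INR z') a)
        = m * (c2 / c1 * Rpower (INR z / INR z') a) by ring.
rewrite /Rdiv Rmult_assoc; apply: Rmult_le_compat_l; first lra.
exact: L_ratio_le.
Qed.

End ThetaComplexity.

Lemma inW_sq_gt0 w c : inW w c -> (0 < w * w)%coq_nat.
Proof. by move=> [[c_ge0 c_lt] _]; apply: Nat.mul_pos_pos; lia. Qed.

Theorem corollary10
  (L : nat -> nat -> R) (a c1 c2 : R)
  (L_pos : forall y z, (0 < L y z)%R)
  (L_mono_y : forall y y' z, (y <= y')%coq_nat -> (L y z <= L y' z)%R)
  (L_mono_z : forall y z z', (z <= z')%coq_nat -> (L y z <= L y z')%R)
  (a_pos : (0 < a)%R) (c1_pos : (0 < c1)%R) (c1_le_c2 : (c1 <= c2)%R)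
  (L_theta : forall y z, (0 < z)%coq_nat ->
      (c1 * Rpower (INR z) a <= L y z <= c2 * Rpower (INR z) a)%R)
  (w : nat -> nat)
  (A1 A2 : forall k : nat, fdca (w k))
  (D : forall k : nat, {set input (w k)})
  (N n P1 P2 p : nat -> nat)
  (HN : forall k, N k = (w k * w k)%N)
  (HNinf : is_lim_seq (fun k => INR (N k)) p_infty)
  (HD : forall k, nontrivial (D k))
  (HA1 : forall k, fdca1_recognizes (A1 k) (D k))
  (HA2 : forall k, fdca2_recognizes (A2 k) (D k))
  (HP1 : forall k, P1 k = #|D k|)
  (HP2 : forall k, exists C : {set lconf (fd_r (A2 k) 2)},
           recognizes_local (fd_f (A2 k) 2) C /\ P2 k = #|C|)
  (Hp : forall k, exists C : {set lconf (fd_r (A2 k) 1)},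
           recognizes_local (fd_f (A2 k) 1) C /\ p k = #|C|)
  (Hn : forall k, n k = nbhd_size (fd_r (A2 k) 1))
  (P1_pos : forall k, (0 < P1 k)%coq_nat)
  (P2_pos : forall k, (0 < P2 k)%coq_nat)
  (p_pos : forall k, (0 < p k)%coq_nat) :
  (is_lim_seq (fun k => L (N k) (P2 k) / L (N k) (P1 k))%R 0
     <-> is_lim_seq (fun k => INR (P2 k) / INR (P1 k))%R 0)
  /\
  (is_lim_seq (fun k => INR (p k) / (INR (P1 k) / Rpower (INR (N k)) (1 / a)))%R 0 ->
   is_lim_seq (fun k => INR (N k) * L (n k) (p k) / L (N k) (P1 k))%R 0).
Proof.
split; first exact: (is_lim_seq_L_ratio_0E _ _ _ _ c1_pos c1_le_c2 L_theta a_pos).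
have N_gt0 k : 0 < INR (N k).
  have [_ [c [c_in _]]] := HA1 k.
  by apply: lt_0_INR; rewrite HN; apply: inW_sq_gt0 c_in.
have ratio_gt0 k : 0 < INR (p k) / (INR (P1 k) / Rpower (INR (N k)) (1 / a)).
  apply: Rdiv_lt_0_compat; first exact: lt_0_INR.
  by apply: Rdiv_lt_0_compat; [apply: lt_0_INR | apply: Rpower_gt0].
move=> /(is_lim_seq_Rpower_0 _ _ a_pos ratio_gt0) ratio_cvg.
apply: (is_lim_seq_0_le_scal (c2 / c1) _ ratio_cvg) => k; split.
  apply/Rlt_le/Rdiv_lt_0_compat; last exact: L_pos.
  exact: Rmult_lt_0_compat (N_gt0 k) (L_pos _ _).
rewrite Rdiv_1_l.
exact: (scaled_L_ratio_le _ _ _ _ c1_pos L_theta a_pos).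
Qed.
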